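(* Let $p>2$ be prime, $n\ge1$, $H_n=Sp_{2n}(p)$, and let $s\in H_n$ be an element of order $p^n+1$ such that the cyclic group $\langle s\rangle$ acts irreducibly on the natural module $\mathbb F_p^{2n}$ (such elements exist). Let $\theta_n^1,\theta_n^2$ be the irreducible constituents, of degrees $(p^n-1)/2$ and $(p^n+1)/2$, of a Weil representation of $H_n$. Then for $i=1,2$ every eigenvalue of the matrix $\theta_n^i(s)$ has multiplicity $1$.
   Context: Weil representation: let $A\subset GL(p^n,\mathbb C)$ be an irreducible subgroup containing the group $Z$ of all scalar matrices with $A/Z$ abelian of exponent $p$, and $N$ its normalizer in $GL(p^n,\mathbb C)$; then $N/A\cong Sp_{2n}(p)$ and, for $p>2$, $N$ splits over $A$, giving a representation of $Sp_{2n}(p)$ of degree $p^n$ (a Weil representation) with exactly two irreducible constituents, of degrees $(p^n-1)/2$ and $(p^n+1)/2$. *)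

From HB Require Import structures.
From mathcomp Require Import all_boot all_order all_algebra all_fingroup all_solvable all_field all_character.
Set Implicit Arguments. Unset Strict Implicit. Unset Printing Implicit Defensive.
Import GRing.Theory Num.Theory.
Local Open Scope ring_scope.

(* Matrices in {'GL_(2*n)[F]} have size (2*n).-1.+1, which equals 2*n for n >= 1. *)
Notation dim2 n := (2 * n)%N.-1.+1.

(* Standard symplectic Gram matrix J = [[0, I_n], [-I_n, 0]] on F^(2n),
   coordinates 0..n-1 and n..2n-1. *)
Definition sympJ (F : fieldType) (n : nat) : 'M[F]_(dim2 n) :=
  \matrix_(i, j)
    (if ((i < n)%N && (j == n + i :> nat)) then 1
     else if ((j < n)%N && (i == n + j :> nat)) then -1 else 0).

Definition sympf (F : fieldType) (n : nat) (v w : 'rV[F]_(dim2 n)) : F :=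
  (v *m sympJ F n *m w^T) 0 0.

Definition Sp_set (F : finFieldType) (n : nat) : {set {'GL_(2 * n)[F]}} :=
  [set g : {'GL_(2 * n)[F]} | GLval g *m sympJ F n *m (GLval g)^T == sympJ F n].

Lemma Sp_group_set (F : finFieldType) (n : nat) : group_set (Sp_set F n).
Proof.
apply/group_setP; split=> [|x y]; first by rewrite inE GL_1E mul1mx trmx1 mulmx1.
rewrite !inE GL_MxE => /eqP Hx /eqP Hy; apply/eqP.
by rewrite trmx_mul !mulmxA -(mulmxA _ (GLval y)) -(mulmxA _ (GLval y *m _)) Hy Hx.
Qed.

(* The symplectic group Sp_{2n}(F) acting on row vectors on the right. *)
Canonical Sp_group (F : finFieldType) (n : nat) := Group (Sp_group_set F n).
Notation Sp F n := (Sp_group F n).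

(* Weil representation of Sp_{2n}(p) of degree p^n (over algC), following the
   normalizer construction: there is a subgroup A = {c * T v | c <> 0, v in F_p^(2n)}
   of GL(p^n, C) containing the scalars, with A/Z = F_p^(2n) (abelian of exponent p),
   commutator pairing eps^omega(v,w) (eps a primitive p-th root of unity), and W(g)
   normalizes A inducing g on A/Z.  W(Sp) is then a complement to A in N(A)
   mapping isomorphically onto N/A = Sp_{2n}(p). *)
Definition weil_rep (p n : nat) (W : mx_representation algC (Sp 'F_p n) (p ^ n)) : Prop :=
  exists (T : 'rV['F_p]_(dim2 n) -> 'M[algC]_(p ^ n)) (eps : algC),
    [/\ p.-primitive_root eps,
        forall v, T v \in unitmx,
        forall v w, exists c : algC, T v *m T w = c *: T (v + w),
        forall v w, T v *m T w = eps ^+ (sympf v w : 'F_p) *: (T w *m T v)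
      & forall g v, g \in Sp 'F_p n ->
          exists c : algC, invmx (W g) *m T v *m W g = c *: T (v *m GLval g)].

Definition nat_repr_cyc (F : finFieldType) (n : nat) (s : {'GL_(2 * n)[F]}) :=
  subg_repr (GLrepr F (2 * n).-1) (subsetT <[s]>%g).

From HB Require Import structures.
From mathcomp Require Import all_boot all_order all_algebra all_fingroup all_solvable all_field all_character.
From mathcomp Require Import zify.
Set Implicit Arguments. Unset Strict Implicit. Unset Printing Implicit Defensive.
Import GRing.Theory Num.Theory.
Local Open Scope ring_scope.

(* The operators T v of the Weil representation are traceless for v != 0 and
   pairwise orthogonal for (A, B) |-> tr (A^-1 B), so they form a basis of the
   p^(2n)-dimensional matrix algebra and \sum_v T v^-1 Y T v = p^n tr(Y) 1.
   Applied to Y = X^-1 with X = W(s^k), which normalises the T v through the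
   fixed-point-free action of s^k, this gives tr(X) tr(X^-1) = 1 for
   0 < k < p^n + 1.  Writing the p^n eigenvalues of W(s), all (p^n + 1)-th
   roots of unity, as a list rs, discrete Fourier inversion computes the
   multiplicity of each root from these traces, and summing over rs gives
   \sum_(z in rs) mult(z) = size rs, so the eigenvalues of W(s) are
   distinct; those of the constituents theta_n^i(s) are a fortiori. *)

Lemma sum_expr_root_unity (z : algC) M : z ^+ M = 1 ->
  \sum_(k < M) z ^+ k = if z == 1 then M%:R else 0.
Proof.
move=> zM; have [->|z1] := eqVneq z 1.
  by rewrite (eq_bigr (fun _ => 1)) ?sumr_const ?card_ord // => k _; rewrite expr1n.
by have /esym/eqP := subrX1 z M; rewrite zM subrr mulf_eq0 subr_eq0 (negbTE z1) => /eqP.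
Qed.

Lemma root_unity_neq0 (z : algC) M : (0 < M)%N -> z ^+ M = 1 -> z != 0.
Proof.
by move=> M_gt0 zM; apply: contra_eq_neq zM => ->; rewrite expr0n gtn_eqF // eq_sym oner_eq0.
Qed.

Lemma count_mem_root_unity (rs : seq algC) M lam : (0 < M)%N ->
  {in rs, forall z, z ^+ M = 1} -> lam ^+ M = 1 ->
  \sum_(k < M) (\sum_(z <- rs) z ^+ k) * lam^-1 ^+ k = M%:R * (count_mem lam rs)%:R.
Proof.
move=> M_gt0 rsM lamM; have lam0 := root_unity_neq0 M_gt0 lamM.
under eq_bigr => k _ do rewrite mulr_suml; rewrite exchange_big /=.
rewrite -sum1_count natr_sum mulr_sumr [RHS]big_mkcond /=.
apply: eq_big_seq => z rs_z.
under eq_bigr => k _ do rewrite -exprMn.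
rewrite sum_expr_root_unity; last by rewrite exprMn exprVn rsM // lamM invr1 mulr1.
by rewrite -(can_eq (mulfK lam0)) divfK // mul1r; case: eqP; rewrite ?mulr1 ?mulr0.
Qed.

Lemma uniq_sum_count_mem (T : eqType) (s : seq T) :
  (\sum_(x <- s) count_mem x s)%N = size s -> uniq s.
Proof.
move=> sum_count; apply: count_mem_uniq => x.
have [s_x|/count_memPn -> //] := boolP (x \in s).
have count_pos y : y \in s -> (0 < count_mem y s)%N.
  by move=> s_y; rewrite lt0n; apply: contraTneq s_y => /count_memPn.
have : (\sum_(y <- s) (count_mem y s - 1) == 0)%N.
  rewrite -(eqn_add2r (size s)) add0n -{2}sum_count -sum1_size -big_split /=.
  by apply/eqP/eq_big_seq => y /count_pos/subnK.
rewrite sum_nat_seq_eq0 => /allP/(_ x s_x); rewrite subn_eq0 => /= le_count.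
by apply/eqP; rewrite eqn_leq le_count count_pos.
Qed.

Lemma uniq_root_unity_power_sums (rs : seq algC) :
  {in rs, forall z, z ^+ (size rs).+1 = 1} ->
  (forall k, (0 < k <= size rs)%N ->
     (\sum_(z <- rs) z ^+ k) * (\sum_(z <- rs) z ^+ ((size rs).+1 - k)) = 1) ->
  uniq rs.
Proof.
set m := size rs => rsM psum; apply: uniq_sum_count_mem.
have psum_inv (k : 'I_m.+1) : \sum_(l <- rs) l^-1 ^+ k = \sum_(l <- rs) l ^+ (m.+1 - k).
  apply: eq_big_seq => l rs_l; have l0 := root_unity_neq0 (ltn0Sn m) (rsM l rs_l).
  apply: (mulIf (expf_neq0 k l0)).
  by rewrite exprVn mulVf ?expf_neq0 // -exprD subnK ?rsM // ltnW.
have size_rs : m%:R = \sum_(z <- rs) 1 :> algC by rewrite /m -sum1_size natr_sum.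
have psum0 : \sum_(z <- rs) z ^+ 0 = m%:R.
  by rewrite size_rs; apply: eq_bigr => z _; rewrite expr0.
have psumM : \sum_(z <- rs) z ^+ m.+1 = m%:R.
  by rewrite size_rs; apply: eq_big_seq => z /rsM.
apply/eqP; rewrite -(eqr_nat algC) -(inj_eq (mulfI (_ : m.+1%:R != 0))) ?pnatr_eq0 //.
apply/eqP; rewrite natr_sum mulr_sumr.
under eq_big_seq => l rs_l do
  rewrite -(count_mem_root_unity (ltn0Sn m) rsM (rsM l rs_l)).
rewrite exchange_big /=; under eq_bigr => k _ do rewrite -mulr_sumr psum_inv.
rewrite big_ord_recl subn0 psum0 psumM (eq_bigr (fun=> 1)) => [|k _]; last first.
  by rewrite psum //= /bump /= add1n ltnS ltn_ord.
by rewrite sumr_const card_ord -!natrM -natrD mulSn addnC.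
Qed.

Lemma char_poly_conjmx (R : comUnitRingType) m (P A : 'M[R]_m) : P \in unitmx ->
  char_poly (invmx P *m A *m P) = char_poly A.
Proof.
move=> P_unit; rewrite /char_poly /char_poly_mx.
have -> : 'X%:M - map_mx polyC (invmx P *m A *m P) =
    map_mx polyC (invmx P) *m ('X%:M - map_mx polyC A) *m map_mx polyC P.
  rewrite mulmxBr mulmxBl !map_mxM scalar_mxC; congr (_ - _).
  by rewrite -mulmxA -map_mxM mulVmx // map_mx1 mulmx1.
by rewrite !det_mulmx mulrAC -det_mulmx -map_mxM mulVmx // map_mx1 det1 mul1r.
Qed.

Lemma exp_diag_mx (R : pzRingType) m (d : 'rV[R]_m) k :
  diag_mx d ^+ k = diag_mx (\row_j d 0 j ^+ k).
Proof.
elim: k => [|k IHk]; first by apply/matrixP => i j; rewrite !mxE expr0.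
rewrite exprS IHk -mulmxE mul_diag_mx; apply/matrixP => i j; rewrite !mxE.
by case: eqP => [->|]; rewrite ?exprS ?mulr0 ?mulr1n.
Qed.

Lemma exp_conjmx (R : comUnitRingType) m (P A : 'M[R]_m) k : P \in unitmx ->
  (invmx P *m A *m P) ^+ k = invmx P *m A ^+ k *m P.
Proof.
move=> P_unit; elim: k => [|k IHk]; first by rewrite !expr0 mulmx1 mulVmx.
by rewrite !exprS IHk -!mulmxE !mulmxA mulmxK.
Qed.

Lemma finite_order_mx_diagonalizable m (X : 'M[algC]_m.+1) M : (0 < M)%N ->
  X ^+ M = 1 -> diagonalizable X.
Proof.
move=> M_gt0 XM; have [z z_prim] := C_prim_root_exists M_gt0.
apply/diagonalizableP; exists [seq z ^+ i | i <- index_iota 0 M].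
  rewrite map_inj_in_uniq ?iota_uniq // => i j; rewrite !mem_index_iota => lt_iM lt_jM.
  by move/eqP; rewrite (eq_prim_root_expr z_prim) !modn_small // => /eqP.
rewrite big_map (factor_Xn_sub_1 z_prim); apply: mxminpoly_min.
by rewrite rmorphB rmorphXn /= horner_mx_X horner_mx_C XM subrr.
Qed.

Lemma finite_order_mx_spectrum m (X : 'M[algC]_m) M : (0 < M)%N -> X ^+ M = 1 ->
  exists rs : seq algC, [/\ {in rs, forall z, z ^+ M = 1},
    forall k, \tr (X ^+ k) = \sum_(z <- rs) z ^+ k &
    char_poly X = \prod_(z <- rs) ('X - z%:P)].
Proof.
move=> M_gt0 XM; case: m X XM => [|m] X XM.
  by exists [::]; split=> // [k|]; rewrite big_nil ?flatmx0 ?mxtrace0 // /char_poly det_mx00.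
have [P P_unit /(diagonalizable_forLR P_unit)[d XE]] :=
  finite_order_mx_diagonalizable M_gt0 XM.
rewrite mxpoly.conjVmx // in XE.
exists [seq d 0 j | j <- enum 'I_m.+1]; split.
- move=> _ /mapP[j _ ->]; have := exp_conjmx (diag_mx d) M P_unit.
  rewrite -XE XM => /(congr1 (fun Y => P *m Y *m invmx P)).
  rewrite mulmx1 mulmxV // !mulmxA mulmxK // mulmxV // mul1mx exp_diag_mx => /matrixP/(_ j j).
  by rewrite !mxE eqxx mulr1n.
- move=> k; rewrite XE exp_conjmx // mxtrace_mulC mulmxA mulmxV // mul1mx.
  by rewrite exp_diag_mx mxtrace_diag big_image; apply: eq_bigr => j _; rewrite mxE.
by rewrite XE char_poly_conjmx // char_poly_trig ?diag_mx_is_trig // big_image;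
  apply: eq_bigr => j _; rewrite mxE eqxx mulr1n.
Qed.

Lemma root_char_poly_finite_order m (X : 'M[algC]_m) M lam : (0 < M)%N ->
  X ^+ M = 1 -> root (char_poly X) lam -> lam ^+ M = 1.
Proof.
move=> M_gt0 XM; have [rs [rsM _ ->]] := finite_order_mx_spectrum M_gt0 XM.
by rewrite root_prod_XsubC => /rsM.
Qed.

Lemma mup_char_poly_finite_order m (X : 'M[algC]_m) M lam : (0 < M)%N ->
  X ^+ M = 1 -> lam ^+ M = 1 ->
  M%:R * (mup lam (char_poly X))%:R = \sum_(k < M) \tr (X ^+ k) * lam^-1 ^+ k.
Proof.
move=> M_gt0 XM lamM; have [rs [rsM trX ->]] := finite_order_mx_spectrum M_gt0 XM.
rewrite mu_prod_XsubC -(count_mem_root_unity M_gt0 rsM lamM).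
by apply: eq_bigr => k _; rewrite trX.
Qed.

Lemma mup_char_poly_le1 m (X : 'M[algC]_m) : X ^+ m.+1 = 1 ->
    (forall k, (0 < k <= m)%N -> \tr (X ^+ k) * \tr (X ^+ (m.+1 - k)) = 1) ->
  forall lam, (mup lam (char_poly X) <= 1)%N.
Proof.
move=> XM trX lam; have [rs [rsM trE cpE]] := finite_order_mx_spectrum (ltn0Sn m) XM.
have size_rs : size rs = m.
  by have := size_char_poly X; rewrite cpE size_prod_XsubC => -[].
rewrite cpE mu_prod_XsubC count_uniq_mem ?leq_b1 //.
by apply: uniq_root_unity_power_sums; rewrite size_rs // => k /trX; rewrite !trE.
Qed.

Lemma repr_mx_expg (gT : finGroupType) (G : {group gT}) n
    (rG : mx_representation algC G n) x k :
  x \in G -> rG (x ^+ k)%g = rG x ^+ k.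
Proof.
move=> Gx; elim: k => [|k IHk]; first by rewrite expg0 repr_mx1 expr0.
by rewrite expgS repr_mxM ?groupX // IHk exprS mulmxE.
Qed.

Lemma mup_char_poly_irr_constt (gT : finGroupType) (G : {group gT}) n
    (rG : mx_representation algC G n) (i : Iirr G) x lam :
  x \in G -> i \in irr_constt (cfRepr rG) ->
  (mup lam (char_poly ('Chi_i x)) <= mup lam (char_poly (rG x)))%N.
Proof.
move=> Gx i_rG; have [root_lam|/mupNroot-> //] := boolP (root (char_poly ('Chi_i x)) lam).
have [_ /char_reprP[[m rH] ->] rG_E] := constt_charP i (cfRepr_char rG) i_rG.
have M_gt0 := order_gt0 x.
have reprM p (rK : mx_representation algC G p) : rK x ^+ #[x]%g = 1.
  by rewrite -repr_mx_expg // expg_order repr_mx1.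
have lamM := root_char_poly_finite_order M_gt0 (reprM _ _) root_lam.
have trE k : \tr (rG x ^+ k) = \tr ('Chi_i x ^+ k) + \tr (rH x ^+ k).
  have := congr1 (fun phi : 'CF(G) => phi (x ^+ k)%g) rG_E.
  by rewrite /= -irrRepr !cfunE groupX // !mulr1n !repr_mx_expg.
have : (#[x]%g%:R * (mup lam (char_poly (rG x)))%:R : algC) =
       #[x]%g%:R * (mup lam (char_poly ('Chi_i x)) + mup lam (char_poly (rH x)))%:R.
  rewrite natrD mulrDr !mup_char_poly_finite_order ?reprM // -big_split /=.
  by apply: eq_bigr => k _; rewrite trE mulrDl.
have M_neq0 : #[x]%g%:R != 0 :> algC by rewrite pnatr_eq0 -lt0n.
move/(mulfI M_neq0)/eqP; rewrite eqr_nat => /eqP->.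
exact: leq_addr.
Qed.

Lemma invmxM (R : comUnitRingType) n (A B : 'M[R]_n) : A \in unitmx -> B \in unitmx ->
  invmx (A *m B) = invmx B *m invmx A.
Proof.
move=> A_unit B_unit; have AB_unit : A *m B \in unitmx by rewrite unitmx_mul A_unit B_unit.
have AB_inv : A *m B *m (invmx B *m invmx A) = 1%:M by rewrite mulmxA mulmxK // mulmxV.
by rewrite -[LHS]mulmx1 -AB_inv mulmxA mulVmx // mul1mx.
Qed.

Lemma comm_mx_all_scalar (R : pzRingType) n (Z : 'M[R]_n) :
  (forall Y, Z *m Y = Y *m Z) -> is_scalar_mx Z.
Proof.
case: n Z => [|n] Z cZ; apply/is_scalar_mxP; first by exists 0; apply/matrixP => -[].
exists (Z 0 0); apply/matrixP => a b.
have delta_entries i j k l : Z k i * (j == l)%:R = (k == i)%:R * Z j l.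
  have /matrixP/(_ k l) := cZ (delta_mx i j).
  rewrite !mxE (bigD1 i) // [in RHS](bigD1 j) //= !big1 => [|h /negbTE jh|h /negbTE ih].
  - by rewrite !mxE !eqxx andbT !addr0 eq_sym.
  - by rewrite mxE jh andbF mul0r.
  by rewrite mxE ih mulr0.
rewrite mxE; have [<-|ab] := eqVneq a b.
  by have := delta_entries 0 a 0 a; rewrite !eqxx mulr1 mul1r mulr1n => ->.
by have := delta_entries b b a b; rewrite eqxx (negbTE ab) mulr1 mul0r mulr0n.
Qed.

Section HeisenbergBasis.

Variables (N : nat) (V : finZmodType) (T : V -> 'M[algC]_N).
Hypotheses (N_gt0 : (0 < N)%N) (T_unit : forall v, T v \in unitmx)
  (T_mul : forall v w, exists c, T v *m T w = c *: T (v + w))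
  (T_tr : forall v, v != 0 -> \tr (T v) = 0)
  (card_V : #|V| = (N * N)%N).

Let N_neq0 : N%:R != 0 :> algC.
Proof. by rewrite pnatr_eq0 gtn_eqF. Qed.

Lemma T_mul_neq0 v w c : T v *m T w = c *: T (v + w) -> c != 0.
Proof.
move=> Tvw; have : T v *m T w \in unitmx by rewrite unitmx_mul !T_unit.
by apply: contraTneq => c0; rewrite Tvw c0 unitmxE detZ expr0n gtn_eqF // mul0r unitr0.
Qed.

Lemma mxtrace_T_orth u v : \tr (invmx (T v) *m T u) = if u == v then N%:R else 0.
Proof.
have [->|uv] := eqVneq u v; first by rewrite mulVmx // mxtrace1.
have [c Tvuv] := T_mul v (u - v); have c0 := T_mul_neq0 Tvuv.
rewrite subrKC in Tvuv.
rewrite -[T u](scalerK c0) -Tvuv -scalemxAr mulKmx // mxtraceZ T_tr ?mulr0 //.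
by rewrite subr_eq0.
Qed.

Lemma T0_scalar : is_scalar_mx (T 0).
Proof.
have [c T00] := T_mul 0 0; rewrite addr0 in T00; apply/is_scalar_mxP; exists c.
by rewrite -[LHS](mulKmx (T_unit 0)) T00 -scalemxAr mulVmx // scalemx1.
Qed.

Let Tbasis := [tuple T (enum_val i) | i < #|V|].

Lemma T_free : free Tbasis.
Proof.
have Tbasis_nth (i : 'I_#|V|) : Tbasis`_i = T (enum_val i) by rewrite nth_mktuple.
apply/freeP => k k0 i; have /(congr1 (fun A => \tr (invmx (T (enum_val i)) *m A))) := k0.
rewrite mulmx0 linear0 mulmx_sumr linear_sum (bigD1 i) //= big1 ?addr0 => [|j ji].
  rewrite Tbasis_nth -scalemxAr mxtraceZ mxtrace_T_orth eqxx => /eqP.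
  by rewrite mulf_eq0 (negbTE N_neq0) orbF => /eqP.
rewrite Tbasis_nth -scalemxAr mxtraceZ mxtrace_T_orth.
by rewrite (inj_eq enum_val_inj) (negbTE ji) mulr0.
Qed.

Lemma cent_T_scalar Z : (forall w, Z *m T w = T w *m Z) -> is_scalar_mx Z.
Proof.
move=> cZT; apply: comm_mx_all_scalar => Y.
have span_full : (<<Tbasis>> = fullv)%VS.
  apply/eqP; rewrite eqEdim subvf dimvf /= (eqnP T_free) size_tuple card_V.
  by rewrite dim_matrix.
have /coord_span -> : Y \in <<Tbasis>>%VS by rewrite span_full memvf.
rewrite mulmx_sumr mulmx_suml; apply: eq_bigr => i _.
by rewrite -scalemxAr -scalemxAl nth_mktuple cZT.
Qed.

Lemma sum_conj_T Y : \sum_v invmx (T v) *m Y *m T v = (N%:R * \tr Y)%:M.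
Proof.
set Z := \sum_v _.
have cZT w : Z *m T w = T w *m Z.
  (* Conjugation by T w permutes the summands, as T (v + w) is proportional to T v T w. *)
  suff conjZ : invmx (T w) *m Z *m T w = Z by rewrite -{2}conjZ !mulmxA mulmxV // mul1mx.
  rewrite mulmx_sumr mulmx_suml [RHS](reindex_inj (addIr w)) /=; apply: eq_bigr => v _.
  have [c Tvw] := T_mul v w; have c0 := T_mul_neq0 Tvw.
  rewrite -[T (v + w)](scalerK c0) -Tvw invmxZ; last first.
    by rewrite unitmxZ ?unitfE ?invr_eq0 // unitmx_mul !T_unit.
  rewrite invmxM // -!scalemxAl -scalemxAr scalerA invrK mulfV // scale1r.
  by rewrite !mulmxA.
have /is_scalar_mxP[a Za] := cent_T_scalar cZT.
have trZ : \tr Z = (N * N)%:R * \tr Y.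
  rewrite /Z linear_sum (eq_bigr (fun=> \tr Y)) => [|v _]; last first.
    by rewrite /= mxtrace_mulC mulmxA mulmxV // mul1mx.
  by rewrite sumr_const card_V mulr_natl.
rewrite Za; congr (_%:M); apply: (mulfI N_neq0).
by rewrite [LHS]mulr_natl -mxtrace_scalar -Za trZ natrM mulrA.
Qed.

Lemma mxtrace_normalizer_fixed_point_free X (f : V -> V) : X \in unitmx ->
    (forall v, exists c, invmx X *m T v *m X = c *: T (f v)) ->
    (forall v, f v = v -> v = 0) ->
  \tr X * \tr (invmx X) = 1.
Proof.
move=> X_unit XT f_fpf.
(* Only v = 0 contributes: X^-1 T v X is proportional to T (f v), orthogonal to T v. *)
have := congr1 (fun A => \tr (A *m X)) (sum_conj_T (invmx X)).
rewrite /= mulmx_suml linear_sum (bigD1 0) //= big1 => [|v v0]; last first.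
  have [c XTv] := XT v.
  rewrite -!mulmxA (mulmxA (invmx X)) XTv -scalemxAr mxtraceZ mxtrace_T_orth.
  by case: eqP => [/f_fpf/eqP|_]; rewrite ?(negbTE v0) ?mulr0.
have /is_scalar_mxP[a T0a] := T0_scalar.
have T0_central : invmx X *m T 0 = T 0 *m invmx X by rewrite T0a scalar_mxC.
rewrite -(mulmxA (invmx (T 0))) T0_central mulmxA mulVmx // mul1mx mulVmx // mxtrace1 addr0.
rewrite mul_scalar_mx mxtraceZ -mulrA -{1}[N%:R]mulr1 => /(mulfI N_neq0) ->.
exact: mulrC.
Qed.

End HeisenbergBasis.

Lemma sympJ_col_delta (F : fieldType) n (j : 'I_(dim2 n)) : (0 < n)%N ->
  exists i, exists2 s : F, s != 0 & forall k, sympJ F n k i = (k == j)%:R * s.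
Proof.
move=> n_gt0; have lt_j2n : (j < 2 * n)%N by have := ltn_ord j; lia.
have [lt_jn|le_nj] := ltnP j n.
  have lt_i : (n + j < dim2 n)%N by lia.
  exists (Ordinal lt_i), 1; first exact: oner_neq0.
  move=> k; rewrite mxE /= eqn_add2l (ltnNge (n + j)) leq_addr /= mulr1.
  have [->|kj] := eqVneq k j; first by rewrite lt_jn eqxx.
  by rewrite andbC; case: eqP => // /val_inj jk; rewrite jk eqxx in kj.
have lt_i : (j - n < dim2 n)%N by lia.
exists (Ordinal lt_i), (-1); first by rewrite oppr_eq0 oner_neq0.
move=> k; rewrite mxE /= ifF; last by apply/negbTE/negP => /andP[_ /eqP]; lia.
have -> : (j - n < n)%N by lia.
(* [sympJ] is stated in ring_scope: the [n + i] there is the semiring addition of [nat]. *)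
have -> : (n + (j - n)%N)%R = j :> nat by exact: (subnKC le_nj).
by rewrite -[(k == j :> nat)]/(k == j); case: (k == j); rewrite ?mul1r ?mul0r.
Qed.

Lemma sympf_nondeg (F : fieldType) n (v : 'rV[F]_(dim2 n)) : (0 < n)%N -> v != 0 ->
  exists w, sympf v w != 0.
Proof.
move=> n_gt0 v0; have [j vj0] : exists j, v 0 j != 0.
  apply/existsP; apply: contraNT v0 => /existsPn v0.
  by apply/eqP/rowP => j; rewrite mxE; apply/eqP/negbNE/v0.
have [i [s s0 Ji]] := sympJ_col_delta F j n_gt0.
exists (delta_mx 0 i); rewrite /sympf trmx_delta -colE !mxE.
rewrite (bigD1 j) //= big1 => [|k kj]; last by rewrite Ji (negbTE kj) mul0r mulr0.
by rewrite Ji eqxx mul1r addr0 mulf_neq0.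
Qed.

Lemma mxtrace_skew_comm_eq0 (F : fieldType) n (A B : 'M[F]_n) c :
  B \in unitmx -> c != 1 -> A *m B = c *: (B *m A) -> \tr A = 0.
Proof.
move=> B_unit c1 AB; have trA : \tr A = c * \tr A.
  rewrite -{1}(mulmxK B_unit A) AB -scalemxAl mxtraceZ mxtrace_mulC.
  by rewrite mulmxA mulVmx // mul1mx.
apply/eqP; move/eqP: trA; rewrite -subr_eq0 -{1}[\tr A]mul1r -mulrBl mulf_eq0.
by rewrite subr_eq0 eq_sym (negbTE c1).
Qed.

Lemma weil_mxtrace_eq0 p n N (T : 'rV['F_p]_(dim2 n) -> 'M[algC]_N) (eps : algC) :
    prime p -> (0 < n)%N -> p.-primitive_root eps -> (forall v, T v \in unitmx) ->
    (forall v w, T v *m T w = eps ^+ (sympf v w : 'F_p) *: (T w *m T v)) ->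
  forall v, v != 0 -> \tr (T v) = 0.
Proof.
move=> p_pr n_gt0 eps_prim T_unit T_comm v v0.
have [w vw0] := sympf_nondeg n_gt0 v0.
apply: mxtrace_skew_comm_eq0 (T_unit w) _ (T_comm v w).
rewrite -(prim_order_dvd eps_prim) gtnNdvd //.
  by rewrite lt0n; apply: contraNneq vw0 => vw_0; apply/eqP/val_inj.
by rewrite -[p in (_ < p)%N](Fp_cast p_pr) ltn_ord.
Qed.

Lemma cyc_irr_fixed_point_free (F : finFieldType) n (s : {'GL_(2 * n)[F]}) k :
    mx_irreducible (nat_repr_cyc s) -> (s ^+ k != 1)%g ->
  forall v : 'rV[F]_(dim2 n), v *m GLval (s ^+ k)%g = v -> v = 0.
Proof.
move=> [_ _ simple_s] sk1 v fix_v.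
set A := GLval (s ^+ k)%g - 1%:M.
have modU : mxmodule (nat_repr_cyc s) (kermx A).
  apply/mxmoduleP => _ /cycleP[j ->]; apply/sub_kermxP.
  have cA : GLval (s ^+ j)%g *m A = A *m GLval (s ^+ j)%g.
    by rewrite /A mulmxBr mulmxBl mulmx1 mul1mx -!GL_MxE -!expgD addnC.
  by rewrite /= -mulmxA cA mulmxA mulmx_ker mul0mx.
have vU : (v <= kermx A)%MS by apply/sub_kermxP; rewrite /A mulmxBr fix_v mulmx1 subrr.
apply/eqP; apply: contraR sk1 => v0.
have U0 : kermx A != 0 by apply: contraNneq v0 => U0; move: vU; rewrite U0 submx0.
have /sub_kermxP := simple_s _ modU (submx1 _) U0.
rewrite mul1mx /A => /eqP; rewrite subr_eq0 => /eqP sk1; apply/eqP/val_inj; exact: sk1.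
Qed.

Theorem lemma2 (p n : nat) (W : mx_representation algC (Sp 'F_p n) (p ^ n))
    (s : {'GL_(2 * n)['F_p]}) :
  prime p -> (2 < p)%N -> (0 < n)%N ->
  weil_rep W ->
  s \in Sp 'F_p n -> #[s]%g = (p ^ n).+1 ->
  mx_irreducible (nat_repr_cyc s) ->
  forall i : Iirr (Sp 'F_p n), i \in irr_constt (cfRepr W) ->
  forall lam : algC, root (char_poly ('Chi_i s)) lam ->
    mup lam (char_poly ('Chi_i s)) = 1%N.
Proof.
move=> p_pr _ n_gt0 [T [eps [eps_prim T_unit T_mul T_comm W_T]]] Sp_s o_s irr_s i i_W lam.
move=> lam_root; have N_gt0 : (0 < p ^ n)%N by rewrite expn_gt0 prime_gt0.
have card_V : #|'rV['F_p]_(dim2 n)| = (p ^ n * p ^ n)%N.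
  by rewrite card_mx card_Fp // -expnD mul1n prednK ?muln_gt0 ?n_gt0 // addnn mul2n.
have T_tr := weil_mxtrace_eq0 p_pr n_gt0 eps_prim T_unit T_comm.
have sM : (s ^+ (p ^ n).+1)%g = 1%g by rewrite -o_s expg_order.
apply/eqP; rewrite eqn_leq -XsubC_dvd ?monic_neq0 ?char_poly_monic //.
rewrite dvdp_XsubCl lam_root andbT.
apply: leq_trans (mup_char_poly_irr_constt lam Sp_s i_W) _.
apply: mup_char_poly_le1 => [|k /andP[k_gt0 le_kN]].
  by rewrite -repr_mx_expg // sM repr_mx1.
have sk_inv : (s ^+ ((p ^ n).+1 - k))%g = ((s ^+ k)^-1)%g.
  by apply/esym/eqP; rewrite eq_invg_mul -expgD subnKC ?sM // leqW.
rewrite -!repr_mx_expg // sk_inv repr_mxV ?groupX //.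
apply: (mxtrace_normalizer_fixed_point_free N_gt0 T_unit T_mul T_tr card_V
  (f := fun v => v *m GLval (s ^+ k)%g)).
- exact/repr_mx_unit/groupX.
- by move=> v; apply: W_T; rewrite groupX.
apply: cyc_irr_fixed_point_free irr_s _.
by rewrite -order_dvdn o_s gtnNdvd.
Qed.
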